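(* Let $\ell\in\{0,1,2,\ldots\}$. (1) For $q>2$, $$\tilde\gamma_\ell(q)=\frac{\log^{\ell+1}(q-1)-\log^{\ell+1}(q-2)}{2(\ell+1)}-\ell!\sum_{k=1}^\infty\frac{(-1)^k2^k}{(k+1)!}\sum_{j=0}^{\ell}\frac{(-1)^j}{j!}\,s(k+1,\ell-j+1)\,\zeta_E^{(j)}(k+1,q).$$ (2) For $q>1$, $$\tilde\gamma_\ell(q)=\frac{\log^{\ell+1}q-\log^{\ell+1}(q-1)}{2(\ell+1)}-\ell!\sum_{k=1}^\infty\frac{1}{(2k+1)!}\sum_{j=0}^{\ell}\frac{(-1)^j}{j!}\,s(2k+1,\ell-j+1)\,\zeta_E^{(j)}(2k+1,q).$$
   Context: For $q>0$, $\zeta_E(z,q)=\sum_{n=0}^\infty (-1)^n (n+q)^{-z}$ for $\mathrm{Re}(z)>0$, extended by analytic continuation to an entire function of $z$; $\zeta_E^{(m)}(z,q)$ denotes $\frac{\partial^m}{\partial z^m}\zeta_E(z,q)$. The modified Stieltjes constants $\tilde\gamma_k(q)$ are defined by the Taylor expansion $\zeta_E(z,q)=\sum_{k=0}^\infty\frac{(-1)^k\tilde\gamma_k(q)}{k!}(z-1)^k$. $s(n,k)$ are the (signed) Stirling numbers of the first kind: $x(x-1)\cdots(x-n+1)=\sum_{k=0}^n s(n,k)x^k$ (with $s(n,k)=0$ for $k>n$). *)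

From Stdlib Require Import Reals Arith Factorial.
From Coquelicot Require Import Coquelicot.
Open Scope R_scope.

(* Alternating Hurwitz zeta, zeta_E(z,q) = sum_{n>=0} (-1)^n (n+q)^{-z},
   for real z > 0 (the series converges there; it is the restriction of the
   entire function to the real half-line (0,+oo)). *)
Definition zetaE (z q : R) : R :=
  Series (fun n : nat => (-1) ^ n * Rpower (INR n + q) (- z)).

Definition zetaE_deriv (m : nat) (z q : R) : R :=
  Derive_n (fun w => zetaE w q) m z.

(* Modified Stieltjes constants: the Taylor expansion
   zeta_E(z,q) = sum_k (-1)^k gt_k(q)/k! (z-1)^k means
   gt_k(q) = (-1)^k zeta_E^{(k)}(1,q). *)
Definition gammaE (k : nat) (q : R) : R :=
  (-1) ^ k * zetaE_deriv k 1 q.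

(* Signed Stirling numbers of the first kind:
   x(x-1)...(x-n+1) = sum_k s(n,k) x^k. *)
Fixpoint stirling1 (n k : nat) : R :=
  match n, k with
  | O, O => 1
  | O, S _ => 0
  | S _, O => 0
  | S n', S k' => stirling1 n' k' - INR n' * stirling1 n' (S k')
  end.

(* Put a = 1 - z and Phi a y = (y^a - 1)/a. With d_m(a) = (a-1)...(a-m)/(m+1)!, the binomial
   series of Phi a (x (1 + c/x)) gives
     x^(-z) = (Phi a (x+1) - Phi a (x-1))/2 - sum_(k>=1) d_(2k)(a) x^(-z-2k)
            = (Phi a x - Phi a (x-2))/2 - sum_(k>=1) (-2)^k d_k(a) x^(-z-k).
   Taking x = n + q and summing with signs (-1)^n, the Phi-terms telescope, so for z near 1
     zeta_E(z,q) = (Phi a q - Phi a (q-1))/2 - sum_(k>=1) d_(2k)(a) zeta_E(z+2k,q),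
   and similarly with q-1, q-2 and the second expansion. Differentiate l times at z = 1:
   termwise differentiation is justified by |d^i/ds^i zeta_E(s,q)| <= B_i q^(7/4-s), Leibniz'
   rule brings in the derivatives of d_m(1-z) = sum_i s(m+1,i+1) (1-z)^i/(m+1)!, and
   (-1)^l d^l/dz^l Phi (1-z) y at z = 1 equals log^(l+1) y/(l+1). *)

From Stdlib Require Import Reals Arith Factorial Lra Lia.
From Coquelicot Require Import Coquelicot.
Open Scope R_scope.

Lemma is_derive_Req (f : R -> R) (x l l' : R) : is_derive f x l -> l = l' -> is_derive f x l'.
Proof. now intros H <-. Qed.

Lemma locally_open_interval (lo hi z : R) (P : R -> Prop) :
  lo < z < hi -> (forall y, lo < y < hi -> P y) -> locally z P.
Proof.
  intros Hz HP.
  assert (He : 0 < Rmin (z - lo) (hi - z)) by (apply Rmin_pos; lra).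
  exists (mkposreal _ He). intros y Hy. apply HP.
  change (Rabs (y - z) < Rmin (z - lo) (hi - z)) in Hy.
  pose proof (Rmin_l (z - lo) (hi - z)). pose proof (Rmin_r (z - lo) (hi - z)).
  apply Rabs_def2 in Hy. lra.
Qed.

Definition derive_chain (lo hi : R) (F : nat -> R -> R) : Prop :=
  forall i z, lo < z < hi -> is_derive (F i) z (F (S i) z).

Lemma Derive_n_chain lo hi F (f : R -> R) :
  derive_chain lo hi F -> (forall z, lo < z < hi -> f z = F 0%nat z) ->
  forall i z, lo < z < hi -> Derive_n f i z = F i z.
Proof.
  intros HF Hf i. induction i as [|i IH]; intros z Hz; simpl.
  - now apply Hf.
  - rewrite (Derive_ext_loc _ (F i)).
    + apply is_derive_unique. now apply HF.
    + apply (locally_open_interval lo hi); auto.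
Qed.

Lemma derive_chain_minus lo hi F G :
  derive_chain lo hi F -> derive_chain lo hi G -> derive_chain lo hi (fun i z => F i z - G i z).
Proof. intros HF HG i z Hz. exact (is_derive_minus _ _ _ _ _ (HF i z Hz) (HG i z Hz)). Qed.

Lemma derive_chain_scal lo hi c F :
  derive_chain lo hi F -> derive_chain lo hi (fun i z => c * F i z).
Proof. intros HF i z Hz. exact (is_derive_scal _ _ c _ (HF i z Hz)). Qed.

Lemma derive_chain_shift lo hi c F :
  derive_chain lo hi F -> derive_chain (lo - c) (hi - c) (fun i z => F i (z + c)).
Proof.
  intros HF i z Hz.
  apply is_derive_Req with (1 * F (S i) (z + c)); [|ring].
  apply (is_derive_comp (F i) (fun y => y + c)).
  - apply HF. lra.
  - auto_derive; auto.
Qed.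

Lemma derive_chain_reflect lo hi F :
  derive_chain lo hi F -> derive_chain (1 - hi) (1 - lo) (fun i z => (-1) ^ i * F i (1 - z)).
Proof.
  intros HF i z Hz.
  apply is_derive_Req with ((-1) ^ i * ((-1) * F (S i) (1 - z))); [|simpl; ring].
  apply is_derive_scal.
  apply (is_derive_comp (F i) (fun y => 1 - y)).
  - apply HF. lra.
  - auto_derive; auto.
Qed.

Lemma derive_chain_sub lo hi lo' hi' F :
  derive_chain lo hi F -> lo <= lo' -> hi' <= hi -> derive_chain lo' hi' F.
Proof. intros HF H1 H2 i z Hz. apply HF. lra. Qed.

(* Unlike [Binomial.C], this vanishes for [k > n], so Pascal's rule holds by definition. *)
Fixpoint binom (n k : nat) : R :=
  match n, k with
  | O, O => 1
  | O, S _ => 0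
  | S _, O => 1
  | S n', S k' => binom n' k' + binom n' (S k')
  end.

Lemma binom_n_0 n : binom n 0 = 1.
Proof. now destruct n. Qed.

Lemma binom_gt n k : (n < k)%nat -> binom n k = 0.
Proof.
  revert k; induction n as [|n IH]; intros [|k] Hk; try lia; simpl; auto.
  rewrite !IH by lia. ring.
Qed.

Lemma binom_nonneg n k : 0 <= binom n k.
Proof.
  revert k; induction n as [|n IH]; intros [|k]; simpl; try lra.
  pose proof (IH k). pose proof (IH (S k)). lra.
Qed.

Lemma binom_C n k : (k <= n)%nat -> binom n k = Binomial.C n k.
Proof.
  revert k; induction n as [|n IH]; intros [|k] Hk; try lia.
  - unfold Binomial.C; simpl; field.
  - now rewrite binom_n_0, C_n_0.
  - simpl. destruct (Nat.eq_dec k n) as [->|Hkn].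
    + rewrite (binom_gt n (S n)), IH, !C_n_n by lia. ring.
    + rewrite !IH by lia. apply pascal. lia.
Qed.

(* The induction step of Leibniz' rule. *)
Lemma sum_leibniz_step (a b : nat -> R) i :
  sum_f_R0 (fun m => binom i m * (a (S m) * b (i - m)%nat + a m * b (S (i - m)))) i =
  sum_f_R0 (fun m => binom (S i) m * a m * b (S i - m)%nat) (S i).
Proof.
  rewrite (decomp_sum _ (S i)) by lia. simpl pred. rewrite binom_n_0.
  replace (sum_f_R0 (fun m => binom (S i) (S m) * a (S m) * b (S i - S m)%nat) i)
    with (sum_f_R0 (fun m => binom i m * a (S m) * b (i - m)%nat) i
          + sum_f_R0 (fun m => binom i (S m) * a (S m) * b (i - m)%nat) i)
    by (rewrite <- sum_plus; apply sum_eq; intros m _; simpl; ring).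
  replace (sum_f_R0 (fun m => binom i m * (a (S m) * b (i - m)%nat + a m * b (S (i - m)))) i)
    with (sum_f_R0 (fun m => binom i m * a (S m) * b (i - m)%nat) i
          + sum_f_R0 (fun m => binom i m * a m * b (S (i - m))) i)
    by (rewrite <- sum_plus; apply sum_eq; intros m _; ring).
  destruct i as [|i]; [simpl; ring|].
  rewrite (decomp_sum (fun m => binom (S i) m * a m * b (S (S i - m))) (S i)) by lia.
  simpl pred. rewrite binom_n_0, (tech5 (fun m => binom (S i) (S m) * a (S m) * b (S i - m)%nat) i).
  rewrite (binom_gt (S i) (S (S i))) by lia.
  replace (sum_f_R0 (fun m => binom (S i) (S m) * a (S m) * b (S (S i - S m))) i)
    with (sum_f_R0 (fun m => binom (S i) (S m) * a (S m) * b (S i - m)%nat) i)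
    by (apply sum_eq; intros m Hm; do 3 f_equal; lia).
  replace (S i - 0)%nat with (S i) by lia. simpl. ring.
Qed.

Definition leibniz (F G : nat -> R -> R) (i : nat) (z : R) : R :=
  sum_f_R0 (fun m => binom i m * F m z * G (i - m)%nat z) i.

Lemma is_derive_sum (u u' : nat -> R -> R) z N :
  (forall k, (k <= N)%nat -> is_derive (u k) z (u' k z)) ->
  is_derive (fun y => sum_f_R0 (fun k => u k y) N) z (sum_f_R0 (fun k => u' k z) N).
Proof.
  induction N as [|N IH]; intros H; simpl.
  - apply H; lia.
  - apply (is_derive_plus (fun y => sum_f_R0 (fun k => u k y) N) (u (S N))).
    + apply IH; intros; apply H; lia.
    + apply H; lia.
Qed.

Lemma derive_chain_leibniz lo hi F G :
  derive_chain lo hi F -> derive_chain lo hi G -> derive_chain lo hi (leibniz F G).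
Proof.
  intros HF HG i z Hz. unfold leibniz.
  rewrite <- (sum_leibniz_step (fun m => F m z) (fun m => G m z)).
  apply (is_derive_sum (fun m y => binom i m * F m y * G (i - m)%nat y)
    (fun m y => binom i m * (F (S m) y * G (i - m)%nat y + F m y * G (S (i - m)) y))).
  intros k _.
  apply (is_derive_ext (fun y => binom i k * (F k y * G (i - k)%nat y))); [intro; now rewrite Rmult_assoc|].
  apply is_derive_scal, (is_derive_mult (F k) (G (i - k)%nat)); auto.
  exact Rmult_comm.
Qed.

Lemma ex_series_scal_r (c : R) (a : nat -> R) : ex_series a -> ex_series (fun k => a k * c).
Proof. intros [l H]. exists (l * c). exact (is_series_scal_r c a l H). Qed.

Lemma ex_series_Rabs_le (a b : nat -> R) :
  (forall k, Rabs (a k) <= b k) -> ex_series b -> ex_series a.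
Proof. intros H Hb. exact (ex_series_le a b H Hb). Qed.

Lemma is_series_ext_R (a b : nat -> R) (l : R) : (forall n, a n = b n) -> is_series a l -> is_series b l.
Proof. apply is_series_ext. Qed.

Lemma Rabs_Series_le (a b : nat -> R) :
  (forall k, Rabs (a k) <= b k) -> ex_series b -> Rabs (Series a) <= Series b.
Proof.
  intros H Hb.
  assert (Ha : ex_series (fun k => Rabs (a k))).
  { apply (ex_series_Rabs_le _ b); auto. intro k. now rewrite Rabs_Rabsolu. }
  eapply Rle_trans; [now apply Series_Rabs|].
  apply Series_le; auto. intro k; split; [apply Rabs_pos | apply H].
Qed.

Lemma Series_nonneg (a : nat -> R) : (forall k, 0 <= a k) -> ex_series a -> 0 <= Series a.
Proof.
  intros H Ha.
  replace 0 with (Series (fun k => 0 * a k)) by (rewrite Series_scal_l; ring).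
  apply Series_le; auto. intro k. rewrite Rmult_0_l. split; [lra | apply H].
Qed.

Lemma Series_split (a : nat -> R) N :
  ex_series a -> Series a = sum_f_R0 a N + Series (fun k => a (S N + k)%nat).
Proof. intros H. rewrite (Series_incr_n a (S N)); auto. lia. Qed.

Lemma Series_tail_lim (a : nat -> R) : ex_series a ->
  forall eps, 0 < eps ->
  exists N0, forall N, (N0 <= N)%nat -> Rabs (Series (fun k => a (S N + k)%nat)) < eps.
Proof.
  intros H eps He.
  destruct (proj1 (is_series_Reals _ _) (Series_correct _ H) eps He) as [N0 HN].
  exists N0. intros N HN0. specialize (HN N HN0). unfold Rdist in HN.
  rewrite (Series_split a N H) in HN.
  replace (sum_f_R0 a N - (sum_f_R0 a N + Series (fun k => a (S N + k)%nat)))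
    with (- Series (fun k => a (S N + k)%nat)) in HN by ring.
  now rewrite Rabs_Ropp in HN.
Qed.

Lemma sum_f_R0_Series (c : nat -> R) (G : nat -> nat -> R) N :
  (forall n, ex_series (G n)) ->
  ex_series (fun k => sum_f_R0 (fun n => c n * G n k) N) /\
  sum_f_R0 (fun n => c n * Series (G n)) N = Series (fun k => sum_f_R0 (fun n => c n * G n k) N).
Proof.
  intros H. induction N as [|N [IH1 IH2]]; simpl.
  - split; [exact (ex_series_scal_l _ _ (H 0%nat)) | now rewrite Series_scal_l].
  - pose proof (ex_series_scal_l (c (S N)) _ (H (S N))) as E. split.
    + exact (ex_series_plus _ _ IH1 E).
    + rewrite IH2, <- Series_scal_l, <- Series_plus; auto.
Qed.

Lemma Rabs_Series_diff_quotient_le lo hi (u u' : nat -> R -> R) (M : nat -> R) x h :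
  lo < x < hi -> lo < x + h < hi -> h <> 0 ->
  (forall k t, lo < t < hi -> is_derive (u k) t (u' k t)) ->
  (forall k t, lo < t < hi -> Rabs (u' k t) <= M k) -> ex_series M ->
  ex_series (fun k => u k x) -> ex_series (fun k => u k (x + h)) ->
  Rabs ((Series (fun k => u k (x + h)) - Series (fun k => u k x)) / h) <= Series M.
Proof.
  intros Hx Hxh Hh Hd HM HMs Hux Huxh.
  unfold Rdiv. rewrite Rabs_mult, Rabs_inv.
  apply (Rmult_le_reg_r (Rabs h)); [now apply Rabs_pos_lt|].
  rewrite Rmult_assoc, Rinv_l, Rmult_1_r by now apply Rabs_no_R0.
  rewrite <- Series_minus, <- Series_scal_r by auto.
  apply Rabs_Series_le; [|now apply ex_series_scal_r].
  intro k.
  assert (Hseg : forall c, Rmin x (x + h) <= c <= Rmax x (x + h) -> lo < c < hi).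
  { intros c Hc. unfold Rmin, Rmax in Hc. destruct (Rle_dec x (x + h)); lra. }
  destruct (MVT_abs (u k) (u' k) x (x + h)) as [c [-> Hc]].
  - intros c Hc. apply is_derive_Reals, Hd, Hseg, Hc.
  - replace (x + h - x) with h by ring.
    apply Rmult_le_compat_r; [apply Rabs_pos | apply HM, Hseg, Hc].
Qed.

(* Split off a partial sum, which is differentiable, and a tail, whose difference
   quotients are uniformly small by the mean value theorem. *)
Lemma is_derive_Series lo hi (u u' : nat -> R -> R) (M : nat -> R) z :
  lo < z < hi ->
  (forall k y, lo < y < hi -> is_derive (u k) y (u' k y)) ->
  (forall k y, lo < y < hi -> Rabs (u' k y) <= M k) -> ex_series M ->
  (forall y, lo < y < hi -> ex_series (fun k => u k y)) ->
  is_derive (fun y => Series (fun k => u k y)) z (Series (fun k => u' k z)).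
Proof.
  intros Hz Hd HM HMs Hu.
  assert (Hu' : ex_series (fun k => u' k z)) by (apply (ex_series_Rabs_le _ M); auto).
  apply is_derive_Reals. intros eps Heps.
  destruct (Series_tail_lim M HMs (eps / 4)) as [N HN]; [lra|].
  specialize (HN N (le_n N)).
  set (TM := Series (fun k => M (S N + k)%nat)) in HN.
  assert (HMN : ex_series (fun k => M (S N + k)%nat)) by now apply ex_series_incr_n.
  destruct (proj1 (is_derive_Reals _ _ _)
              (is_derive_sum u u' z N (fun k _ => Hd k z Hz)) (eps / 2)) as [d1 Hd1]; [lra|].
  assert (Hdel : 0 < Rmin d1 (Rmin (z - lo) (hi - z))).
  { apply Rmin_pos; [apply (cond_pos d1) | apply Rmin_pos; lra]. }
  exists (mkposreal _ Hdel). intros h hne hlt. simpl in hlt.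
  pose proof (Rmin_l d1 (Rmin (z - lo) (hi - z))).
  pose proof (Rmin_r d1 (Rmin (z - lo) (hi - z))).
  pose proof (Rmin_l (z - lo) (hi - z)). pose proof (Rmin_r (z - lo) (hi - z)).
  assert (Hzh : lo < z + h < hi) by (apply Rabs_def2 in hlt; lra).
  specialize (Hd1 h hne ltac:(lra)).
  rewrite (Series_split _ N (Hu _ Hzh)), (Series_split _ N (Hu _ Hz)), (Series_split _ N Hu').
  set (R1 := Series (fun k => u (S N + k)%nat (z + h))).
  set (R0 := Series (fun k => u (S N + k)%nat z)).
  set (C := Series (fun k => u' (S N + k)%nat z)).
  assert (HC : Rabs C <= TM) by (apply Rabs_Series_le; auto).
  assert (HR : Rabs ((R1 - R0) / h) <= TM).
  { apply (Rabs_Series_diff_quotient_le lo hi (fun k => u (S N + k)%nat) (fun k => u' (S N + k)%nat));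
      auto; apply (ex_series_incr_n (fun k => u k _)), Hu; auto. }
  assert (Hsplit : forall S1 S0 S' : R,
    (S1 + R1 - (S0 + R0)) / h - (S' + C) = ((S1 - S0) / h - S') + (R1 - R0) / h - C)
    by (intros; field; auto).
  rewrite Hsplit.
  eapply Rle_lt_trans; [apply Rabs_triang|].
  eapply Rle_lt_trans; [apply Rplus_le_compat_r, Rabs_triang|].
  rewrite Rabs_Ropp. rewrite Rabs_right in HN by (apply Rle_ge, Series_nonneg; auto;
    intro k; eapply Rle_trans; [apply Rabs_pos | apply (HM _ z Hz)]).
  lra.
Qed.

Lemma derive_chain_Series lo hi (D : nat -> nat -> R -> R) (M : nat -> nat -> R) :
  (forall k, derive_chain lo hi (D k)) ->
  (forall i k z, lo < z < hi -> Rabs (D k i z) <= M i k) ->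
  (forall i, ex_series (M i)) ->
  derive_chain lo hi (fun i z => Series (fun k => D k i z)).
Proof.
  intros HD HM HMs i z Hz.
  apply (is_derive_Series lo hi (fun k => D k i) (fun k => D k (S i)) (M (S i))); auto.
  - intros k y Hy. now apply HD.
  - intros y Hy. apply (ex_series_Rabs_le _ (M i)); auto.
Qed.

Lemma exp_le x y : x <= y -> exp x <= exp y.
Proof. intros [H | ->]; [left; now apply exp_increasing | right; reflexivity]. Qed.

Lemma Rpower_le_base_neg (x y a : R) : 0 < x -> x <= y -> a <= 0 -> Rpower y a <= Rpower x a.
Proof.
  intros Hx Hxy Ha. apply exp_le.
  assert (ln x <= ln y) by (apply ln_le; lra). nra.
Qed.

Lemma exp_pow_INR x k : exp x ^ k = exp (INR k * x).
Proof.
  induction k as [|k IH]; simpl pow.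
  - now rewrite Rmult_0_l, exp_0.
  - rewrite IH, <- exp_plus, S_INR. f_equal. ring.
Qed.

Definition ln_pow_const (i : nat) : R := (4 * INR i) ^ i.

Lemma ln_pow_const_nonneg i : 0 <= ln_pow_const i.
Proof. apply pow_le. pose proof (pos_INR i). lra. Qed.

(* From [u <= k exp (u / k)] with [k = 4 i]. *)
Lemma pow_le_exp_quarter (L : R) i : 0 <= L -> L ^ i <= ln_pow_const i * exp (L / 4).
Proof.
  intros HL. unfold ln_pow_const. destruct i as [|i].
  - simpl. rewrite Rmult_1_l, <- exp_0. apply exp_le. lra.
  - set (k := 4 * INR (S i)).
    assert (Hk : 0 < k) by (unfold k; rewrite S_INR; pose proof (pos_INR i); lra).
    assert (H1 : L <= k * exp (L / k)).
    { pose proof (exp_ineq1_le (L / k)).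
      replace L with (k * (L / k)) at 1 by (field; lra).
      apply Rmult_le_compat_l; lra. }
    eapply Rle_trans; [apply pow_incr; split; [exact HL | exact H1]|].
    rewrite Rpow_mult_distr. apply Rmult_le_compat_l; [apply pow_le; lra|].
    rewrite exp_pow_INR. right. f_equal. unfold k. field.
    rewrite S_INR. pose proof (pos_INR i). lra.
Qed.

(* Mean value theorem applied to [t^(-1/2)] on [y-1, y]. *)
Lemma Rpower_3_2_le_diff (y : R) : 1 < y ->
  Rpower y (-3/2) <= 2 * (Rpower (y - 1) (-1/2) - Rpower y (-1/2)).
Proof.
  intros Hy.
  destruct (MVT_abs (fun t => Rpower t (-1/2)) (fun t => -1/2 * Rpower t (-1/2 - 1)) (y - 1) y)
    as [c [Hc1 Hc2]].
  { intros c Hc. apply derivable_pt_lim_power.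
    unfold Rmin in Hc. destruct (Rle_dec (y - 1) y); lra. }
  unfold Rmin, Rmax in Hc2. destruct (Rle_dec (y - 1) y) as [_|]; [|lra].
  replace (-1/2 - 1) with (-3/2) in Hc1 by field.
  assert (Hd : Rpower y (-1/2) <= Rpower (y - 1) (-1/2)) by (apply Rpower_le_base_neg; lra).
  rewrite Rabs_left1 in Hc1 by lra.
  replace (y - (y - 1)) with 1 in Hc1 by ring. rewrite Rabs_R1, Rmult_1_r in Hc1.
  rewrite Rabs_mult, Rabs_left1 in Hc1 by lra.
  rewrite Rabs_right in Hc1 by (left; apply exp_pos).
  assert (Rpower y (-3/2) <= Rpower c (-3/2)) by (apply Rpower_le_base_neg; lra).
  lra.
Qed.

Lemma ex_series_Rpower_3_2 (q : R) : 1 < q -> ex_series (fun n => Rpower (INR n + q) (-3/2)).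
Proof.
  intros Hq.
  set (u := fun N => sum_f_R0 (fun n => Rpower (INR n + q) (-3/2)) N).
  assert (Hb : forall N, u N <= 2 * (Rpower (q - 1) (-1/2) - Rpower (INR N + q) (-1/2))).
  { induction N as [|N IH]; unfold u in *.
    - simpl. rewrite Rplus_0_l. now apply Rpower_3_2_le_diff.
    - rewrite tech5. pose proof (Rpower_3_2_le_diff (INR (S N) + q)) as H.
      rewrite S_INR in *. replace (INR N + 1 + q - 1) with (INR N + q) in H by ring.
      pose proof (pos_INR N). specialize (H ltac:(lra)). lra. }
  destruct (growing_cv u) as [l Hl].
  - intro N. unfold u. rewrite tech5. pose proof (exp_pos (-3/2 * ln (INR (S N) + q))).
    unfold Rpower. lra.
  - exists (2 * Rpower (q - 1) (-1/2)). intros r [N ->].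
    specialize (Hb N). assert (0 < Rpower (INR N + q) (-1/2)) by apply exp_pos. lra.
  - exists l. now apply is_series_Reals.
Qed.

Definition zeta_3_2 (q : R) : R := Series (fun n => Rpower (INR n + q) (-3/2)).

Lemma zeta_3_2_nonneg q : 1 < q -> 0 <= zeta_3_2 q.
Proof.
  intros Hq. apply Series_nonneg; [intro; left; apply exp_pos | now apply ex_series_Rpower_3_2].
Qed.

Definition zetaE_term (q : R) (n i : nat) (s : R) : R :=
  (-1) ^ n * (- ln (INR n + q)) ^ i * Rpower (INR n + q) (- s).

Definition zetaE_derivs (q : R) (i : nat) (s : R) : R := Series (fun n => zetaE_term q n i s).

(* The factor [ln^i] costs [(n+q)^(1/4)], the factor [q^(-mu)] the shift of [s] by [mu]. *)
Lemma zetaE_term_bound q n i s mu :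
  1 < q -> 0 <= mu -> 7/4 + mu <= s ->
  Rabs (zetaE_term q n i s) <= ln_pow_const i * Rpower (INR n + q) (-3/2) * Rpower q (- mu).
Proof.
  intros Hq Hmu Hs. unfold zetaE_term.
  pose proof (pos_INR n).
  assert (HL : 0 <= ln (INR n + q)) by (rewrite <- ln_1; apply ln_le; lra).
  assert (HLq : ln q <= ln (INR n + q)) by (apply ln_le; lra).
  assert (0 <= ln q) by (rewrite <- ln_1; apply ln_le; lra).
  rewrite !Rabs_mult, pow_1_abs, <- RPow_abs, Rabs_Ropp, (Rabs_right (ln _)) by lra.
  rewrite (Rabs_right (Rpower _ _)) by (left; apply exp_pos).
  rewrite Rmult_1_l.
  eapply Rle_trans.
  { apply Rmult_le_compat_r; [left; apply exp_pos | now apply pow_le_exp_quarter]. }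
  unfold Rpower. rewrite !Rmult_assoc. apply Rmult_le_compat_l; [apply ln_pow_const_nonneg|].
  rewrite <- !exp_plus. apply exp_le. nra.
Qed.

Lemma ex_series_zetaE_bound q i mu : 1 < q ->
  ex_series (fun n => ln_pow_const i * Rpower (INR n + q) (-3/2) * Rpower q (- mu)).
Proof.
  intros Hq. apply ex_series_scal_r.
  exact (ex_series_scal_l (ln_pow_const i) _ (ex_series_Rpower_3_2 q Hq)).
Qed.

Lemma derive_chain_zetaE q hi : 1 < q -> derive_chain (7/4) hi (zetaE_derivs q).
Proof.
  intros Hq. unfold zetaE_derivs.
  apply (derive_chain_Series (7/4) hi (zetaE_term q)
           (fun i n => ln_pow_const i * Rpower (INR n + q) (-3/2) * Rpower q (- 0))).
  - intros n i z _. unfold zetaE_term, Rpower.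
    auto_derive; auto. simpl. ring.
  - intros i n z Hz. apply zetaE_term_bound; lra.
  - intro i. now apply ex_series_zetaE_bound.
Qed.

Lemma zetaE_derivs_bound q i s mu :
  1 < q -> 0 <= mu -> 7/4 + mu <= s ->
  Rabs (zetaE_derivs q i s) <= ln_pow_const i * zeta_3_2 q * Rpower q (- mu).
Proof.
  intros Hq Hmu Hs. unfold zetaE_derivs, zeta_3_2.
  rewrite <- Series_scal_l, <- Series_scal_r.
  apply Rabs_Series_le; [intro n; now apply zetaE_term_bound | now apply ex_series_zetaE_bound].
Qed.

Lemma zetaE_deriv_eq q j s : 1 < q -> 7/4 < s -> zetaE_deriv j s q = zetaE_derivs q j s.
Proof.
  intros Hq Hs. unfold zetaE_deriv.
  apply (Derive_n_chain (7/4) (s + 1) (zetaE_derivs q)); [now apply derive_chain_zetaE| |lra].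
  intros w _. unfold zetaE, zetaE_derivs, zetaE_term.
  apply Series_ext. intro n. simpl. ring.
Qed.

Lemma stirling1_gt n k : (n < k)%nat -> stirling1 n k = 0.
Proof.
  revert k; induction n as [|n IH]; intros [|k] Hk; try lia; simpl; auto.
  rewrite !IH by lia. ring.
Qed.

Lemma Rabs_stirling1_le n k : Rabs (stirling1 n k) <= INR (fact n).
Proof.
  revert k; induction n as [|n IH]; intros [|k]; simpl stirling1.
  - rewrite Rabs_R1. simpl; lra.
  - rewrite Rabs_R0. simpl; lra.
  - rewrite Rabs_R0. apply pos_INR.
  - rewrite fact_simpl, mult_INR, S_INR.
    eapply Rle_trans; [apply Rabs_triang|].
    rewrite Rabs_Ropp, Rabs_mult, (Rabs_right (INR n)) by (apply Rle_ge, pos_INR).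
    pose proof (IH k). pose proof (IH (S k)). pose proof (pos_INR n). nra.
Qed.

Fixpoint falling (m : nat) (a : R) : R :=
  match m with O => 1 | S m' => falling m' a * (a - INR (S m')) end.

Lemma sum_stirling1_falling m a :
  sum_f_R0 (fun i => stirling1 (S m) (S i) * a ^ i) m = falling m a.
Proof.
  induction m as [|m IH]; [simpl; ring|].
  simpl falling. rewrite <- IH.
  transitivity (sum_f_R0 (fun i => stirling1 (S m) i * a ^ i) (S m)
                - INR (S m) * sum_f_R0 (fun i => stirling1 (S m) (S i) * a ^ i) (S m)).
  { rewrite scal_sum, <- minus_sum. apply sum_eq. intros i _.
    change (stirling1 (S (S m)) (S i)) with (stirling1 (S m) i - INR (S m) * stirling1 (S m) (S i)).
    ring. }
  rewrite (decomp_sum _ (S m)), tech5, (stirling1_gt (S m) (S (S m))) by lia.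
  simpl pred.
  replace (sum_f_R0 (fun i => stirling1 (S m) (S i) * a ^ S i) m)
    with (a * sum_f_R0 (fun i => stirling1 (S m) (S i) * a ^ i) m)
    by (rewrite scal_sum; apply sum_eq; intros; simpl; ring).
  simpl. ring.
Qed.

Definition pow_deriv (i p : nat) (a : R) : R :=
  if (p <=? i)%nat then INR (fact i) / INR (fact (i - p)) * a ^ (i - p) else 0.

Lemma derive_chain_pow_deriv i lo hi : derive_chain lo hi (pow_deriv i).
Proof.
  intros p a _. unfold pow_deriv.
  destruct (Nat.leb_spec p i) as [H1|H1]; destruct (Nat.leb_spec (S p) i) as [H2|H2];
    try lia; try exact (is_derive_const _ _).
  - apply is_derive_Req with (INR (fact i) / INR (fact (i - p)) * (INR (i - p) * a ^ pred (i - p))).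
    + apply is_derive_scal, is_derive_Reals, derivable_pt_lim_pow.
    + replace (i - p)%nat with (S (i - S p)) by lia. simpl pred.
      rewrite fact_simpl, mult_INR. field.
      split; apply not_0_INR; try lia; apply fact_neq_0.
  - replace p with i by lia. rewrite Nat.sub_diag.
    auto_derive; auto. ring.
Qed.

Lemma fact_le_pow_mul i p : (p <= i)%nat -> INR (fact i) <= INR i ^ p * INR (fact (i - p)).
Proof.
  induction p as [|p IH]; intros H.
  - rewrite Nat.sub_0_r. simpl; lra.
  - eapply Rle_trans; [apply IH; lia|].
    replace (i - p)%nat with (S (i - S p)) by lia.
    rewrite fact_simpl, mult_INR. simpl pow.
    assert (INR (S (i - S p)) <= INR i) by (apply le_INR; lia).
    pose proof (pos_INR (fact (i - S p))). pose proof (pow_le (INR i) p (pos_INR i)).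
    replace (INR i * INR i ^ p * INR (fact (i - S p)))
      with ((INR i ^ p * INR (fact (i - S p))) * INR i) by ring.
    rewrite (Rmult_comm (INR i ^ p)), Rmult_assoc, (Rmult_comm (INR i ^ p)).
    rewrite (Rmult_comm (INR (S (i - S p)))).
    apply Rmult_le_compat_l; auto. apply Rmult_le_pos; auto.
Qed.

Lemma Rabs_pow_deriv_le i p a : Rabs a <= 1 -> Rabs (pow_deriv i p a) <= INR i ^ p.
Proof.
  intros Ha. unfold pow_deriv. destruct (Nat.leb_spec p i) as [H|H].
  - assert (Hf : 0 < INR (fact (i - p))) by (apply lt_0_INR, lt_O_fact).
    assert (Hq : 0 <= INR (fact i) / INR (fact (i - p)) <= INR i ^ p).
    { split; [apply Rdiv_le_0_compat; [apply pos_INR | lra]|].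
      apply (Rmult_le_reg_r (INR (fact (i - p)))); auto.
      unfold Rdiv. rewrite Rmult_assoc, Rinv_l by lra. rewrite Rmult_1_r.
      now apply fact_le_pow_mul. }
    assert (Hp : Rabs (a ^ (i - p)) <= 1).
    { rewrite <- RPow_abs, <- (pow1 (i - p)). apply pow_incr. split; auto. apply Rabs_pos. }
    rewrite Rabs_mult, Rabs_right by lra.
    pose proof (Rabs_pos (a ^ (i - p))). nra.
  - rewrite Rabs_R0. apply pow_le, pos_INR.
Qed.

Lemma pow_deriv_at_0 i p : pow_deriv i p 0 = if Nat.eqb i p then INR (fact p) else 0.
Proof.
  unfold pow_deriv. destruct (Nat.eqb_spec i p) as [<-|Hip].
  - rewrite Nat.leb_refl, Nat.sub_diag. simpl. field.
  - destruct (Nat.leb_spec p i); [|reflexivity].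
    replace (i - p)%nat with (S (i - S p)) by lia. simpl. ring.
Qed.

Definition poly_deriv (e : nat -> R) (m p : nat) (a : R) : R :=
  sum_f_R0 (fun i => e i * pow_deriv i p a) m.

Lemma derive_chain_poly_deriv e m lo hi : derive_chain lo hi (poly_deriv e m).
Proof.
  intros p a Ha. unfold poly_deriv.
  apply (is_derive_sum (fun i a => e i * pow_deriv i p a) (fun i a => e i * pow_deriv i (S p) a)).
  intros k _. apply is_derive_scal, (derive_chain_pow_deriv k lo hi); auto.
Qed.

Lemma Rabs_poly_deriv_le e m p a :
  (forall i, Rabs (e i) <= 1) -> Rabs a <= 1 -> Rabs (poly_deriv e m p a) <= (INR m + 1) ^ S p.
Proof.
  intros He Ha. unfold poly_deriv.
  eapply Rle_trans; [apply sum_f_R0_triangle|].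
  eapply Rle_trans.
  { apply sum_Rle with (Bn := fun _ => INR m ^ p). intros i Hi.
    rewrite Rabs_mult. pose proof (He i). pose proof (Rabs_pow_deriv_le i p a Ha).
    pose proof (Rabs_pos (e i)). pose proof (Rabs_pos (pow_deriv i p a)).
    assert (INR i ^ p <= INR m ^ p) by (apply pow_incr; split; [apply pos_INR | apply le_INR; lia]).
    nra. }
  rewrite sum_cte. simpl pow. rewrite S_INR, Rmult_comm.
  pose proof (pos_INR m).
  apply Rmult_le_compat_l; [lra | apply pow_incr; lra].
Qed.

Lemma sum_f_R0_single (f : nat -> R) m p :
  (forall i, i <> p -> f i = 0) -> sum_f_R0 f m = if (p <=? m)%nat then f p else 0.
Proof.
  intros H. induction m as [|m IH]; simpl.
  - destruct (Nat.leb_spec p 0); [now replace p with 0%nat by lia | apply H; lia].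
  - rewrite IH. destruct (Nat.leb_spec p m); destruct (Nat.leb_spec p (S m)); try lia.
    + rewrite (H (S m)) by lia. ring.
    + replace p with (S m) by lia. ring.
    + rewrite (H (S m)) by lia. ring.
Qed.

Definition stirling_coef (m i : nat) : R := stirling1 (S m) (S i) / INR (fact (S m)).

Lemma Rabs_stirling_coef_le m i : Rabs (stirling_coef m i) <= 1.
Proof.
  unfold stirling_coef, Rdiv.
  assert (Hf : 0 < INR (fact (S m))) by (apply lt_0_INR, lt_O_fact).
  rewrite Rabs_mult, Rabs_inv, (Rabs_right (INR _)) by lra.
  apply (Rmult_le_reg_r (INR (fact (S m)))); auto.
  rewrite Rmult_assoc, Rinv_l, Rmult_1_r, Rmult_1_l by lra. apply Rabs_stirling1_le.
Qed.

Lemma poly_deriv_stirling_at_0 m p :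
  poly_deriv (stirling_coef m) m p 0 = stirling_coef m p * INR (fact p).
Proof.
  unfold poly_deriv. rewrite (sum_f_R0_single _ m p).
  - rewrite pow_deriv_at_0, Nat.eqb_refl. destruct (Nat.leb_spec p m); [reflexivity|].
    unfold stirling_coef. rewrite stirling1_gt by lia. unfold Rdiv. ring.
  - intros i Hi. rewrite pow_deriv_at_0. destruct (Nat.eqb_spec i p); [lia | ring].
Qed.

Lemma poly_deriv_stirling_O m a :
  poly_deriv (stirling_coef m) m 0 a = falling m a / INR (fact (S m)).
Proof.
  rewrite <- sum_stirling1_falling. unfold poly_deriv, stirling_coef, Rdiv.
  rewrite Rmult_comm, scal_sum. apply sum_eq. intros i _.
  unfold pow_deriv. rewrite Nat.sub_0_r. cbn [Nat.leb].
  field. split; apply not_0_INR, fact_neq_0.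
Qed.

(* [Phi a y] is the integral of [t ^ (a - 1)] from [1] to [y]. *)
Definition Phi (a y : R) : R :=
  if Req_EM_T a 0 then ln y else (Rpower y a - 1) / a.

Lemma is_derive_Phi a y : 0 < y -> is_derive (Phi a) y (Rpower y (a - 1)).
Proof.
  intros Hy. unfold Phi. destruct (Req_EM_T a 0) as [->|Ha].
  - apply is_derive_Reals. replace (Rpower y (0 - 1)) with (/ y).
    + now apply derivable_pt_lim_ln.
    + replace (0 - 1) with (- (1)) by ring. now rewrite Rpower_Ropp, Rpower_1.
  - apply is_derive_Req with (/ a * (a * Rpower y (a - 1) - 0)); [|field; auto].
    apply (is_derive_ext (fun y => / a * (Rpower y a - 1))); [intro; apply Rmult_comm|].
    apply is_derive_scal, (is_derive_minus (fun y => Rpower y a) (fun _ => 1)).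
    + now apply is_derive_Reals, derivable_pt_lim_power.
    + exact (is_derive_const _ _).
Qed.

Lemma Phi_mult a u v : 0 < u -> 0 < v -> Phi a (u * v) = Phi a u + Rpower u a * Phi a v.
Proof.
  intros Hu Hv. unfold Phi. destruct (Req_EM_T a 0) as [->|Ha].
  - rewrite ln_mult, Rpower_O by auto. ring.
  - rewrite <- Rpower_mult_distr by auto. field; auto.
Qed.

Lemma Phi_1 a : Phi a 1 = 0.
Proof.
  unfold Phi. destruct (Req_EM_T a 0); [apply ln_1|].
  unfold Rpower. rewrite ln_1, Rmult_0_r, exp_0. unfold Rdiv. ring.
Qed.

Lemma Rpower_pred y a : 0 < y -> y * Rpower y (a - 1) = Rpower y a.
Proof.
  intros Hy. rewrite <- (Rpower_1 y) at 1 by auto.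
  rewrite <- Rpower_plus. f_equal. ring.
Qed.

Lemma mul_Rpower_pred_Phi a y : 0 < y -> y * Rpower y (a - 1) = 1 + a * Phi a y.
Proof.
  intros Hy. rewrite Rpower_pred by auto. unfold Phi.
  destruct (Req_EM_T a 0) as [->|Ha]; [rewrite Rpower_O by auto; ring | field; auto].
Qed.

Lemma Rabs_Phi_step_le a y : a <= 1 -> 0 < y -> Rabs (Phi a (y + 1) - Phi a y) <= Rpower y (a - 1).
Proof.
  intros Ha Hy.
  destruct (MVT_abs (Phi a) (fun t => Rpower t (a - 1)) y (y + 1)) as [c [-> Hc]].
  { intros c Hc. apply is_derive_Reals, is_derive_Phi.
    unfold Rmin in Hc. destruct (Rle_dec y (y + 1)); lra. }
  replace (y + 1 - y) with 1 by ring. rewrite Rabs_R1, Rmult_1_r.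
  rewrite Rabs_right by (left; apply exp_pos).
  unfold Rmin, Rmax in Hc. destruct (Rle_dec y (y + 1)); [|lra].
  apply Rpower_le_base_neg; lra.
Qed.

(* The coefficients of [Phi a (1 + t) = sum_m phi_coef a m * t ^ (m + 1)], i.e.
   [binomial(a, m + 1) / a]. *)
Definition phi_coef (a : R) (m : nat) : R := falling m a / INR (fact (S m)).

Lemma phi_coef_O a : phi_coef a 0 = 1.
Proof. unfold phi_coef. simpl. field. Qed.

Lemma phi_coef_S a m : INR (S (S m)) * phi_coef a (S m) = (a - INR (S m)) * phi_coef a m.
Proof.
  unfold phi_coef. change (falling (S m) a) with (falling m a * (a - INR (S m))).
  rewrite (fact_simpl (S m)), mult_INR.
  field. split; apply not_0_INR; try lia. apply fact_neq_0.
Qed.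

Lemma phi_coef_neq_0 a m : a < 1 -> phi_coef a m <> 0.
Proof.
  intros Ha. unfold phi_coef, Rdiv.
  apply Rmult_integral_contrapositive. split.
  - induction m as [|m IH]; [simpl; lra|].
    change (falling (S m) a) with (falling m a * (a - INR (S m))).
    apply Rmult_integral_contrapositive. split; auto.
    rewrite S_INR. pose proof (pos_INR m). lra.
  - apply Rinv_neq_0_compat, not_0_INR, fact_neq_0.
Qed.

Lemma is_lim_seq_div_INR_2 (c : R) : is_lim_seq (fun n => c / (INR n + 2)) 0.
Proof.
  assert (H : is_lim_seq (fun n => INR n + 2) p_infty).
  { apply (is_lim_seq_plus _ _ p_infty 2 p_infty); [apply is_lim_seq_INR | apply is_lim_seq_const|].
    reflexivity. }
  apply is_lim_seq_inv in H; [|discriminate].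
  apply (is_lim_seq_scal_l _ c) in H. simpl in H. rewrite Rmult_0_r in H.
  exact H.
Qed.

Lemma CV_radius_phi_coef a : a < 1 -> CV_radius (phi_coef a) = 1.
Proof.
  intros Ha. replace 1 with (/ 1) by field.
  apply CV_radius_finite_DAlembert; [intro; now apply phi_coef_neq_0 | lra|].
  apply is_lim_seq_ext with (fun n => 1 - (1 + a) / (INR n + 2)).
  - intro n. pose proof (phi_coef_neq_0 a n Ha). pose proof (pos_INR n).
    assert (E : phi_coef a (S n) / phi_coef a n = (a - INR (S n)) / INR (S (S n))).
    { apply (Rmult_eq_reg_l (INR (S (S n)))); [|apply not_0_INR; lia].
      unfold Rdiv. rewrite <- Rmult_assoc, phi_coef_S. field. split; auto. apply not_0_INR; lia. }
    rewrite E, !S_INR, Rabs_left1.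
    + field. lra.
    + unfold Rdiv. apply Rmult_le_0_r; [lra | left; apply Rinv_0_lt_compat; lra].
  - pose proof (is_lim_seq_minus' _ _ 1 0 (is_lim_seq_const 1) (is_lim_seq_div_INR_2 (1 + a))) as H.
    now rewrite Rminus_0_r in H.
Qed.

Lemma ex_series_of_ex_pseries (c : nat -> R) x : ex_pseries c x -> ex_series (fun k => c k * x ^ k).
Proof.
  apply ex_series_ext. intro k.
  rewrite pow_n_pow. unfold scal; simpl; unfold mult; simpl. ring.
Qed.

Lemma is_derive_Rpower_1_plus b s : -1 < s ->
  is_derive (fun s => Rpower (1 + s) b) s (b * Rpower (1 + s) (b - 1)).
Proof.
  intros Hs. apply is_derive_Req with (1 * (b * Rpower (1 + s) (b - 1))); [|ring].
  apply (is_derive_comp (fun y => Rpower y b) (fun s => 1 + s)).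
  - apply is_derive_Reals, derivable_pt_lim_power. lra.
  - auto_derive; auto; ring.
Qed.

Section PhiSeries.

Variable a : R.
Hypothesis Ha : a < 1.

Let f := PSeries (PS_incr_1 (phi_coef a)).
Let f' := PSeries (PS_derive (PS_incr_1 (phi_coef a))).

Lemma Rabs_lt_CV_radius_phi_coef t : -1 < t < 1 -> Rbar_lt (Rabs t) (CV_radius (phi_coef a)).
Proof. intros Ht. rewrite CV_radius_phi_coef by auto. simpl. apply Rabs_def1; lra. Qed.

Lemma phi_series_ode t : -1 < t < 1 -> (1 + t) * f' t = 1 + a * f t.
Proof.
  intros Ht.
  assert (Hr : Rbar_lt (Rabs t) (CV_radius (PS_incr_1 (phi_coef a))))
    by (rewrite CV_radius_incr_1; now apply Rabs_lt_CV_radius_phi_coef).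
  assert (ED : ex_series (fun k => INR (S k) * phi_coef a k * t ^ k))
    by exact (ex_series_of_ex_pseries _ _ (ex_pseries_derive _ _ Hr)).
  assert (EA : ex_series (fun k => phi_coef a k * t ^ k))
    by now apply ex_series_of_ex_pseries, CV_radius_inside, Rabs_lt_CV_radius_phi_coef.
  assert (Hf' : f' t = 1 + Series (fun k => INR (S (S k)) * phi_coef a (S k) * t ^ S k)).
  { unfold f', PSeries. rewrite Series_incr_1 by auto.
    unfold PS_derive, PS_incr_1. cbv beta iota. rewrite phi_coef_O.
    change (INR 1) with 1. simpl pow. ring. }
  assert (Htf' : t * f' t = Series (fun k => INR (S k) * phi_coef a k * t ^ S k)).
  { unfold f', PSeries. rewrite <- Series_scal_l. apply Series_ext. intro k.
    unfold PS_derive, PS_incr_1. simpl pow. ring. }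
  assert (Haf : a * f t = Series (fun k => a * phi_coef a k * t ^ S k)).
  { unfold f. rewrite PSeries_incr_1. unfold PSeries. rewrite <- Series_scal_l, <- Series_scal_l.
    apply Series_ext. intro k. simpl pow. ring. }
  assert (E1 : ex_series (fun k => INR (S k) * phi_coef a k * t ^ S k)).
  { apply (ex_series_ext (fun k => INR (S k) * phi_coef a k * t ^ k * t)); [intro k; simpl; ring|].
    now apply ex_series_scal_r. }
  assert (E2 : ex_series (fun k => a * phi_coef a k * t ^ S k)).
  { apply (ex_series_ext (fun k => phi_coef a k * t ^ k * (a * t))); [intro k; simpl; ring|].
    now apply ex_series_scal_r. }
  assert (Hdiff : t * f' t - a * f t
                  = - Series (fun k => INR (S (S k)) * phi_coef a (S k) * t ^ S k)).
  { rewrite Htf', Haf, <- Series_minus by auto.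
    rewrite <- Series_opp.
    apply Series_ext. intro k. rewrite phi_coef_S. ring. }
  replace ((1 + t) * f' t) with (f' t + (t * f' t - a * f t) + a * f t) by ring.
  rewrite Hdiff, Hf'. ring.
Qed.

(* Both sides solve [(1 + t) y' = 1 + a y] with [y 0 = 0], so [(y - Phi) (1 + t) ^ (- a)] is constant. *)
Lemma phi_series_eq_Phi t : -1 < t < 1 -> f t = Phi a (1 + t).
Proof.
  intros Ht.
  set (v := fun s => (f s - Phi a (1 + s)) * Rpower (1 + s) (- a)).
  assert (Hv : forall s, -1 < s < 1 -> is_derive v s 0).
  { intros s Hs. assert (Hy : 0 < 1 + s) by lra.
    apply is_derive_Req with ((f' s - 1 * Rpower (1 + s) (a - 1)) * Rpower (1 + s) (- a)
                            + (f s - Phi a (1 + s)) * (- a * Rpower (1 + s) (- a - 1))).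
    - apply (is_derive_mult (fun s => f s - Phi a (1 + s)) (fun s => Rpower (1 + s) (- a)));
        [| now apply is_derive_Rpower_1_plus | exact Rmult_comm].
      apply (is_derive_minus f (fun s => Phi a (1 + s))).
      + apply is_derive_PSeries. rewrite CV_radius_incr_1. now apply Rabs_lt_CV_radius_phi_coef.
      + apply (is_derive_comp (Phi a) (fun s => 1 + s)); [now apply is_derive_Phi|].
        auto_derive; auto; ring.
    - rewrite <- (Rpower_pred (1 + s) (- a)) by auto.
      pose proof (phi_series_ode s Hs). pose proof (mul_Rpower_pred_Phi a (1 + s) Hy).
      transitivity (Rpower (1 + s) (- a - 1) *
        ((1 + s) * f' s - (1 + s) * Rpower (1 + s) (a - 1) - a * (f s - Phi a (1 + s)))); [ring|].
      rewrite H, H0. ring. }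
  destruct (MVT_abs v (fun _ => 0) 0 t) as [c [Hc _]].
  { intros c Hc. apply is_derive_Reals, Hv.
    unfold Rmin, Rmax in Hc. destruct (Rle_dec 0 t); lra. }
  rewrite Rabs_R0, Rmult_0_l in Hc.
  assert (Hv0 : v 0 = 0).
  { unfold v, f. rewrite PSeries_0, Rplus_0_r, Phi_1. simpl. change (zero : R) with 0. ring. }
  rewrite Hv0, Rminus_0_r in Hc. apply Rabs_eq_0, Rmult_integral in Hc.
  destruct Hc as [H|H]; [lra|].
  pose proof (exp_pos (- a * ln (1 + t))). unfold Rpower in H. lra.
Qed.

Lemma is_series_Phi_1_plus t : -1 < t < 1 ->
  is_series (fun m => phi_coef a m * t ^ S m) (Phi a (1 + t)).
Proof.
  intros Ht. rewrite <- phi_series_eq_Phi by auto. unfold f. rewrite PSeries_incr_1.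
  assert (EA : ex_series (fun k => phi_coef a k * t ^ k))
    by now apply ex_series_of_ex_pseries, CV_radius_inside, Rabs_lt_CV_radius_phi_coef.
  rewrite Rmult_comm.
  apply (is_series_ext (fun k => phi_coef a k * t ^ k * t)); [intro k; simpl; ring|].
  apply is_series_scal_r, Series_correct, EA.
Qed.

End PhiSeries.

Lemma Rpower_mult_inv_pow x a n : 0 < x -> Rpower x a * (/ x) ^ n = Rpower x (a - INR n).
Proof.
  intros Hx. rewrite pow_inv, <- Rpower_pow, <- Rpower_Ropp by lra.
  unfold Rminus. now rewrite Rpower_plus.
Qed.

Lemma is_series_Phi_diff a x c : a < 1 -> 0 < x -> Rabs c < x ->
  is_series (fun m => phi_coef a m * c ^ S m * Rpower x (a - INR (S m))) (Phi a (x + c) - Phi a x).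
Proof.
  intros Ha Hx Hc.
  assert (Ht : -1 < c / x < 1).
  { cut (Rabs (c / x) < 1); [intros H; apply Rabs_def2 in H; lra|]. unfold Rdiv. rewrite Rabs_mult, Rabs_inv, (Rabs_right x) by lra.
    apply (Rmult_lt_reg_r x); [lra|]. rewrite Rmult_assoc, Rinv_l; lra. }
  replace (Phi a (x + c) - Phi a x) with (Rpower x a * Phi a (1 + c / x)).
  2: { replace (x + c) with (x * (1 + c / x)) by (field; lra). rewrite Phi_mult; lra. }
  apply (is_series_ext_R (fun m => Rpower x a * (phi_coef a m * (c / x) ^ S m))).
  - intro m. unfold Rdiv. rewrite <- Rpower_mult_inv_pow, Rpow_mult_distr by lra. ring.
  - exact (is_series_scal_l _ _ _ (is_series_Phi_1_plus a Ha _ Ht)).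
Qed.

Lemma sum_f_R0_even (tau : nat -> R) K :
  (forall k, tau (S (2 * k)) = 0) ->
  sum_f_R0 tau (2 * K) = sum_f_R0 (fun k => tau (2 * k)%nat) K.
Proof.
  intros H. induction K as [|K IH]; [reflexivity|].
  replace (2 * S K)%nat with (S (S (2 * K))) by lia.
  rewrite tech5, tech5, IH, H, tech5. replace (S (S (2 * K))) with (2 * S K)%nat by lia. ring.
Qed.

Lemma is_series_even (tau : nat -> R) l :
  (forall k, tau (S (2 * k)) = 0) -> is_series tau l -> is_series (fun k => tau (2 * k)%nat) l.
Proof.
  intros H Hs. apply is_series_Reals in Hs. apply is_series_Reals.
  intros eps Heps. destruct (Hs eps Heps) as [N HN]. exists N. intros n Hn.
  rewrite <- sum_f_R0_even by auto. apply HN. lia.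
Qed.

Lemma is_series_Phi_central_diff z x : 0 < z -> 1 < x ->
  is_series (fun k => phi_coef (1 - z) (2 * S k) * Rpower x (- (z + INR (2 * S k))))
            (/ 2 * (Phi (1 - z) (x + 1) - Phi (1 - z) (x - 1)) - Rpower x (- z)).
Proof.
  intros Hz Hx. set (a := 1 - z).
  set (tau := fun m => phi_coef a m * (1 ^ S m - (-1) ^ S m) * Rpower x (a - INR (S m))).
  assert (Htau : is_series tau (Phi a (x + 1) - Phi a (x - 1))).
  { pose proof (is_series_Phi_diff a x 1 ltac:(unfold a; lra) ltac:(lra)
                  ltac:(rewrite Rabs_R1; lra)) as H1.
    pose proof (is_series_Phi_diff a x (-1) ltac:(unfold a; lra) ltac:(lra)
                  ltac:(rewrite Rabs_m1; lra)) as H2.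
    replace (x + -1) with (x - 1) in H2 by ring.
    assert (E : Phi a (x + 1) - Phi a (x - 1)
                = (Phi a (x + 1) - Phi a x) - (Phi a (x - 1) - Phi a x)) by ring.
    rewrite E.
    refine (is_series_ext_R _ tau _ _ (is_series_minus _ _ _ _ H1 H2)).
    intro m. unfold tau, minus, plus, opp. simpl. ring. }
  assert (Hodd : forall k, tau (S (2 * k)) = 0).
  { intro k. unfold tau. replace (S (S (2 * k))) with (2 * S k)%nat by lia.
    rewrite pow_1_even, pow1. ring. }
  apply (is_series_incr_1 (fun k => phi_coef a (2 * k) * Rpower x (- (z + INR (2 * k))))).
  replace (plus _ _) with (/ 2 * (Phi a (x + 1) - Phi a (x - 1))).
  2: { change (2 * 0)%nat with 0%nat. rewrite phi_coef_O. simpl INR.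
       change (plus ?u ?v) with (u + v). rewrite Rplus_0_r. ring. }
  apply (is_series_ext_R (fun k => / 2 * tau (2 * k)%nat)).
  - intro k. unfold tau. rewrite pow_1_odd, pow1.
    replace (a - INR (S (2 * k))) with (- (z + INR (2 * k))) by (unfold a; rewrite S_INR; ring).
    field.
  - exact (is_series_scal_l _ _ _ (is_series_even tau _ Hodd Htau)).
Qed.

Lemma is_series_Phi_backward_diff z x : 0 < z -> 2 < x ->
  is_series (fun k => (-1) ^ S k * 2 ^ S k * phi_coef (1 - z) (S k) * Rpower x (- (z + INR (S k))))
            (/ 2 * (Phi (1 - z) x - Phi (1 - z) (x - 2)) - Rpower x (- z)).
Proof.
  intros Hz Hx. set (a := 1 - z).
  apply (is_series_incr_1 (fun m => (-1) ^ m * 2 ^ m * phi_coef a m * Rpower x (- (z + INR m)))).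
  replace (plus _ _) with (/ 2 * (Phi a x - Phi a (x - 2))).
  2: { rewrite phi_coef_O. simpl INR. change (plus ?u ?v) with (u + v).
       rewrite Rplus_0_r. simpl. ring. }
  apply (is_series_ext_R (fun m => - / 2 * (phi_coef a m * (-2) ^ S m * Rpower x (a - INR (S m))))).
  - intro m. replace (a - INR (S m)) with (- (z + INR m)) by (unfold a; rewrite S_INR; ring).
    replace (-2) with (-1 * 2) by ring. rewrite Rpow_mult_distr. simpl pow. field.
  - replace (x - 2) with (x + -2) by ring.
    replace (/ 2 * (Phi a x - Phi a (x + -2))) with (- / 2 * (Phi a (x + -2) - Phi a x)) by ring.
    refine (is_series_scal_l (- / 2) _ _ (is_series_Phi_diff a x (-2) _ _ _)); unfold a; try lra.
    rewrite Rabs_left; lra.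
Qed.

Lemma alternating_telescope (phi : nat -> R) N :
  sum_f_R0 (fun n => (-1) ^ n * (phi (S (S n)) - phi n)) N
  = phi 1%nat - phi 0%nat + (-1) ^ N * (phi (S (S N)) - phi (S N)).
Proof. induction N as [|N IH]; [simpl; ring|]. rewrite tech5, IH. simpl. ring. Qed.

Lemma Rpower_neg_vanishes c0 z : 0 < c0 -> 3/4 <= z ->
  forall eps, 0 < eps -> exists N0, forall N, (N0 <= N)%nat -> Rpower (c0 + INR (S N)) (- z) < eps.
Proof.
  intros Hc Hz eps He.
  pose proof (ex_series_lim_0 _ (ex_series_Rpower_3_2 (c0 + 1) ltac:(lra))) as H.
  destruct (proj1 (is_lim_seq_Reals _ _) H (eps * eps)) as [N0 HN]; [nra|].
  exists N0. intros N HN0. specialize (HN N HN0). unfold Rdist in HN.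
  set (y := c0 + INR (S N)).
  assert (Hy : 1 <= y) by (unfold y; rewrite S_INR; pose proof (pos_INR N); lra).
  replace (INR N + (c0 + 1)) with y in HN by (unfold y; rewrite S_INR; ring).
  rewrite Rminus_0_r, Rabs_right in HN by (left; apply exp_pos).
  replace (-3/2) with (-3/4 + -3/4) in HN by field. rewrite Rpower_plus in HN.
  eapply Rle_lt_trans; [apply Rle_Rpower with (m := -3/4); lra|].
  pose proof (exp_pos (-3/4 * ln y)). unfold Rpower in *. nra.
Qed.

Definition zetaE_tail (q : R) (N : nat) (s : R) : R := Series (fun j => zetaE_term q (S N + j) 0 s).

Definition zeta_3_2_tail (q : R) (N : nat) : R := Series (fun j => Rpower (INR (S N + j) + q) (-3/2)).

Lemma zeta_3_2_tail_nonneg q N : 1 < q -> 0 <= zeta_3_2_tail q N.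
Proof.
  intros Hq. apply Series_nonneg; [intro; left; apply exp_pos|].
  apply (ex_series_incr_n (fun n => Rpower (INR n + q) (-3/2))), ex_series_Rpower_3_2, Hq.
Qed.

Lemma Rabs_zetaE_tail_le q N s mu : 1 < q -> 0 <= mu -> 7/4 + mu <= s ->
  Rabs (zetaE_tail q N s) <= zeta_3_2_tail q N * Rpower q (- mu).
Proof.
  intros Hq Hmu Hs. unfold zetaE_tail, zeta_3_2_tail. rewrite <- Series_scal_r.
  apply Rabs_Series_le.
  - intro j. pose proof (zetaE_term_bound q (S N + j) 0 s mu Hq Hmu Hs) as H.
    change (ln_pow_const 0) with 1 in H. lra.
  - apply ex_series_scal_r.
    apply (ex_series_incr_n (fun n => Rpower (INR n + q) (-3/2))), ex_series_Rpower_3_2, Hq.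
Qed.

Lemma zetaE_derivs_O_split q N s : 1 < q -> 7/4 <= s ->
  zetaE_derivs q 0 s = sum_f_R0 (fun n => (-1) ^ n * Rpower (INR n + q) (- s)) N + zetaE_tail q N s.
Proof.
  intros Hq Hs. unfold zetaE_derivs, zetaE_tail. rewrite (Series_split _ N).
  - f_equal. apply sum_eq. intros n _. unfold zetaE_term. simpl. ring.
  - apply (ex_series_Rabs_le _ (fun n => ln_pow_const 0 * Rpower (INR n + q) (-3/2) * Rpower q (- 0))).
    + intro n. apply zetaE_term_bound; lra.
    + now apply ex_series_zetaE_bound.
Qed.

Section ZetaTransfer.

Variables (q c0 z : R) (W mu : nat -> R).
Hypothesis Hq : 1 < q.
Hypothesis Hc0 : 0 < c0.
Hypothesis Hz : 3/4 < z.
Hypothesis Hmu : forall k, 1 <= mu k.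
Hypothesis HW : ex_series (fun k => Rabs (W k) * Rpower q (- (mu k - 1))).
Hypothesis Hper : forall n,
  is_series (fun k => W k * Rpower (INR n + q) (- (z + mu k)))
    (/ 2 * (Phi (1 - z) (c0 + INR (S (S n))) - Phi (1 - z) (c0 + INR n)) - Rpower (INR n + q) (- z)).

Lemma Rabs_W_zetaE_tail_le N k :
  Rabs (W k * zetaE_tail q N (z + mu k)) <= Rabs (W k) * Rpower q (- (mu k - 1)) * zeta_3_2_tail q N.
Proof.
  rewrite Rabs_mult, Rmult_assoc, (Rmult_comm (Rpower _ _)).
  apply Rmult_le_compat_l; [apply Rabs_pos|].
  apply Rabs_zetaE_tail_le; auto; specialize (Hmu k); lra.
Qed.

Lemma ex_series_W_zetaE_tail N : ex_series (fun k => W k * zetaE_tail q N (z + mu k)).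
Proof.
  apply (ex_series_Rabs_le _ _ (Rabs_W_zetaE_tail_le N)). now apply ex_series_scal_r.
Qed.

Lemma ex_series_W_zetaE : ex_series (fun k => W k * zetaE_derivs q 0 (z + mu k)).
Proof.
  apply (ex_series_Rabs_le _ (fun k => Rabs (W k) * Rpower q (- (mu k - 1)) * zeta_3_2 q));
    [|now apply ex_series_scal_r].
  intro k. rewrite Rabs_mult, Rmult_assoc, (Rmult_comm (Rpower _ _)).
  apply Rmult_le_compat_l; [apply Rabs_pos|].
  pose proof (zetaE_derivs_bound q 0 (z + mu k) (mu k - 1) Hq) as H.
  change (ln_pow_const 0) with 1 in H. specialize (Hmu k).
  rewrite Rmult_1_l in H. apply H; lra.
Qed.

Lemma alternating_partial_sum_eq N :
  sum_f_R0 (fun n => (-1) ^ n * Rpower (INR n + q) (- z)) N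
  = / 2 * (Phi (1 - z) (c0 + 1) - Phi (1 - z) c0) - Series (fun k => W k * zetaE_derivs q 0 (z + mu k))
    + / 2 * ((-1) ^ N * (Phi (1 - z) (c0 + INR (S (S N))) - Phi (1 - z) (c0 + INR (S N))))
    + Series (fun k => W k * zetaE_tail q N (z + mu k)).
Proof.
  set (G := fun n k => W k * Rpower (INR n + q) (- (z + mu k))).
  assert (HG : forall n, ex_series (G n)) by (intro n; eexists; apply Hper).
  assert (E1 : sum_f_R0 (fun n => (-1) ^ n * Rpower (INR n + q) (- z)) N
             = / 2 * sum_f_R0 (fun n => (-1) ^ n * (Phi (1 - z) (c0 + INR (S (S n)))
                                                    - Phi (1 - z) (c0 + INR n))) N
               - sum_f_R0 (fun n => (-1) ^ n * Series (G n)) N).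
  { rewrite scal_sum, <- minus_sum. apply sum_eq. intros n _.
    rewrite (is_series_unique (G n) _ (Hper n)). ring. }
  destruct (sum_f_R0_Series (fun n => (-1) ^ n) G N HG) as [_ E2].
  assert (E3 : forall k, sum_f_R0 (fun n => (-1) ^ n * G n k) N
                         = W k * (zetaE_derivs q 0 (z + mu k) - zetaE_tail q N (z + mu k))).
  { intro k. rewrite (zetaE_derivs_O_split q N) by (auto; specialize (Hmu k); lra).
    unfold Rminus. rewrite Rplus_assoc, Rplus_opp_r, Rplus_0_r, scal_sum.
    apply sum_eq. intros n _. unfold G. ring. }
  rewrite E1, E2, (alternating_telescope (fun j => Phi (1 - z) (c0 + INR j))).
  rewrite (Series_ext _ _ E3).
  rewrite (Series_ext _ (fun k => W k * zetaE_derivs q 0 (z + mu k) - W k * zetaE_tail q N (z + mu k)))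
    by (intro; ring).
  rewrite Series_minus by (apply ex_series_W_zetaE || apply ex_series_W_zetaE_tail).
  simpl INR. rewrite Rplus_0_r. ring.
Qed.

(* The alternating Phi-differences telescope, and the remainders vanish with the tails of zeta_E. *)
Lemma zetaE_transfer :
  zetaE z q = / 2 * (Phi (1 - z) (c0 + 1) - Phi (1 - z) c0)
              - Series (fun k => W k * zetaE_derivs q 0 (z + mu k)).
Proof.
  set (K := Series (fun k => Rabs (W k) * Rpower q (- (mu k - 1)))).
  assert (HK : 0 <= K).
  { apply Series_nonneg; auto. intro k. apply Rmult_le_pos; [apply Rabs_pos | left; apply exp_pos]. }
  apply is_series_unique, is_series_Reals. intros eps He.
  destruct (Rpower_neg_vanishes c0 z Hc0 ltac:(lra) eps He) as [N1 HN1].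
  destruct (Series_tail_lim _ (ex_series_Rpower_3_2 q Hq) (eps / (2 * (K + 1)))) as [N2 HN2].
  { apply Rdiv_lt_0_compat; lra. }
  exists (Nat.max N1 N2). intros N HN. unfold Rdist. rewrite alternating_partial_sum_eq.
  specialize (HN1 N ltac:(lia)). specialize (HN2 N ltac:(lia)).
  fold (zeta_3_2_tail q N) in HN2.
  pose proof (zeta_3_2_tail_nonneg q N Hq) as HT.
  rewrite Rabs_right in HN2 by lra.
  assert (Hd : Rabs (Phi (1 - z) (c0 + INR (S (S N))) - Phi (1 - z) (c0 + INR (S N)))
               <= Rpower (c0 + INR (S N)) (- z)).
  { replace (c0 + INR (S (S N))) with (c0 + INR (S N) + 1) by (rewrite (S_INR (S N)); ring).
    replace (- z) with (1 - z - 1) by ring.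
    apply Rabs_Phi_step_le; [lra | pose proof (pos_INR (S N)); lra]. }
  assert (Hs : Rabs (Series (fun k => W k * zetaE_tail q N (z + mu k))) <= K * zeta_3_2_tail q N).
  { unfold K. rewrite <- Series_scal_r.
    apply Rabs_Series_le; [apply Rabs_W_zetaE_tail_le | now apply ex_series_scal_r]. }
  assert (K * zeta_3_2_tail q N <= eps / 2).
  { apply Rle_trans with ((K + 1) * zeta_3_2_tail q N); [nra|].
    apply Rle_trans with ((K + 1) * (eps / (2 * (K + 1)))); [apply Rmult_le_compat_l; lra|].
    right. field. lra. }
  match goal with |- Rabs (?A + ?B + ?C - ?A) < _ => replace (A + B + C - A) with (B + C) by ring end.
  eapply Rle_lt_trans; [apply Rabs_triang|].
  rewrite Rabs_mult, Rabs_mult, pow_1_abs, Rmult_1_l, (Rabs_right (/ 2)) by lra.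
  lra.
Qed.

End ZetaTransfer.

Lemma is_series_exp y : is_series (fun i => / INR (fact i) * y ^ i) (exp y).
Proof.
  apply is_series_Reals. unfold exp. destruct (exist_exp y) as [l Hl]. exact Hl.
Qed.

(* The coefficients of [Phi a y] as a power series in [a]. *)
Definition ln_pow_coef (y : R) (m : nat) : R := ln y ^ S m / INR (fact (S m)).

Lemma CV_radius_ln_pow_coef y : CV_radius (ln_pow_coef y) = p_infty.
Proof.
  unfold ln_pow_coef. destruct (Req_dec (ln y) 0) as [HL|HL].
  - rewrite (CV_radius_ext _ (fun _ => 0)); [apply CV_radius_const_0|].
    intro m. rewrite HL, pow_i by lia. unfold Rdiv. ring.
  - assert (Hf : forall m, INR (fact m) <> 0) by (intro; apply not_0_INR, fact_neq_0).
    apply CV_radius_infinite_DAlembert.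
    + intro m. unfold Rdiv. apply Rmult_integral_contrapositive.
      split; [now apply pow_nonzero | now apply Rinv_neq_0_compat].
    + apply (is_lim_seq_ext (fun n => Rabs (ln y) / (INR n + 2))).
      * intro n. rewrite <- Rabs_right with (INR n + 2) by (pose proof (pos_INR n); lra).
        unfold Rdiv. rewrite <- Rabs_inv, <- Rabs_mult. f_equal.
        rewrite (fact_simpl (S n)), mult_INR, !S_INR. simpl pow.
        field. repeat split; auto; try (apply pow_nonzero; auto).
        pose proof (pos_INR n). lra.
      * apply is_lim_seq_div_INR_2.
Qed.

Lemma Phi_PSeries a y : 0 < y -> Phi a y = PSeries (ln_pow_coef y) a.
Proof.
  intros Hy. unfold Phi. destruct (Req_EM_T a 0) as [->|Ha].
  - rewrite PSeries_0. unfold ln_pow_coef. simpl. field.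
  - set (L := ln y).
    assert (E1 : exp (a * L) = 1 + Series (fun k => / INR (fact (S k)) * (a * L) ^ S k)).
    { rewrite <- (is_series_unique _ _ (is_series_exp (a * L))).
      rewrite Series_incr_1 by (eexists; apply is_series_exp). simpl. field. }
    assert (E2 : a * PSeries (ln_pow_coef y) a = Series (fun k => / INR (fact (S k)) * (a * L) ^ S k)).
    { unfold PSeries. rewrite <- Series_scal_l. apply Series_ext. intro k. unfold ln_pow_coef.
      fold L. rewrite Rpow_mult_distr. simpl pow. field. apply not_0_INR, fact_neq_0. }
    unfold Rpower. fold L. rewrite E1, <- E2. field. auto.
Qed.

(* [Phi_z_deriv y i z] is the [i]-th derivative of [z |-> Phi (1 - z) y]. *)
Definition Phi_z_deriv (y : R) (i : nat) (z : R) : R :=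
  (-1) ^ i * PSeries (PS_derive_n i (ln_pow_coef y)) (1 - z).

Lemma derive_chain_Phi_z_deriv y lo hi : derive_chain lo hi (Phi_z_deriv y).
Proof.
  intros i z Hz.
  refine (derive_chain_reflect (1 - hi) (1 - lo) (fun i => PSeries (PS_derive_n i (ln_pow_coef y)))
            _ i z _); [|lra].
  clear i z Hz. intros i a _.
  apply is_derive_Req with (PSeries (PS_derive (PS_derive_n i (ln_pow_coef y))) a).
  - apply is_derive_PSeries. rewrite CV_radius_derive_n, CV_radius_ln_pow_coef. exact I.
  - apply PSeries_ext. intro k. unfold PS_derive, PS_derive_n.
    replace (S k + i)%nat with (k + S i)%nat by lia.
    rewrite (fact_simpl k), mult_INR. field. split; apply not_0_INR; try lia. apply fact_neq_0.
Qed.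

Lemma Phi_z_deriv_O y z : 0 < y -> Phi_z_deriv y 0 z = Phi (1 - z) y.
Proof.
  intros Hy. unfold Phi_z_deriv. rewrite Phi_PSeries by auto. simpl. rewrite Rmult_1_l.
  apply PSeries_ext. intro k. unfold PS_derive_n. rewrite Nat.add_0_r. field.
  apply not_0_INR, fact_neq_0.
Qed.

Lemma Phi_z_deriv_at_1 y l : (-1) ^ l * Phi_z_deriv y l 1 = ln y ^ (l + 1) / INR (l + 1).
Proof.
  unfold Phi_z_deriv. rewrite Rminus_diag, PSeries_0.
  unfold PS_derive_n, ln_pow_coef. simpl (0 + l)%nat.
  rewrite <- Rmult_assoc, <- pow_add. replace (l + l)%nat with (2 * l)%nat by lia.
  rewrite pow_1_even, Rmult_1_l. replace (l + 1)%nat with (S l) by lia.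
  rewrite (fact_simpl l), mult_INR. simpl (fact 0). simpl INR at 2.
  field. split; apply not_0_INR; try lia. apply fact_neq_0.
Qed.

Lemma neg1_pow_sub l j : (j <= l)%nat -> (-1) ^ l * (-1) ^ (l - j) = (-1) ^ j.
Proof.
  intros H. replace l with ((l - j) + j)%nat at 1 by lia.
  rewrite pow_add, (Rmult_comm ((-1) ^ (l - j))), Rmult_assoc, <- pow_add.
  replace (l - j + (l - j))%nat with (2 * (l - j))%nat by lia.
  rewrite pow_1_even. ring.
Qed.

Section ShiftedSeries.

Variable q : R.
Hypothesis Hq : 1 < q.
Variable m : nat -> nat.
Hypothesis Hm : forall k, (1 <= m k)%nat.
Variable w : nat -> R.

Definition weight_bound (e k : nat) : R :=
  Rabs (w k) * (INR (m k) + 1) ^ e * Rpower q (- (INR (m k) - 1)).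

Hypothesis Hweight : forall e, ex_series (weight_bound e).

(* The [p]-th derivative of [z |-> w k * phi_coef (1 - z) (m k)]. *)
Definition weight_z_deriv (k p : nat) (z : R) : R :=
  w k * ((-1) ^ p * poly_deriv (stirling_coef (m k)) (m k) p (1 - z)).

Definition shifted_zetaE_deriv (k p : nat) (z : R) : R := zetaE_derivs q p (z + INR (m k)).

(* By Leibniz' rule, [term_z_deriv k i] is the [i]-th derivative of
   [z |-> w k * phi_coef (1 - z) (m k) * zeta_E(z + m k, q)]. *)
Definition term_z_deriv (k : nat) : nat -> R -> R :=
  leibniz (weight_z_deriv k) (shifted_zetaE_deriv k).

Lemma INR_m_ge_1 k : 1 <= INR (m k).
Proof. apply (le_INR 1), Hm. Qed.

Lemma derive_chain_term_z_deriv k : derive_chain (3/4) (5/4) (term_z_deriv k).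
Proof.
  pose proof (INR_m_ge_1 k).
  apply derive_chain_leibniz.
  - apply derive_chain_scal.
    apply (derive_chain_sub (1 - 1) (1 - -1)); [|lra|lra].
    apply derive_chain_reflect, derive_chain_poly_deriv.
  - apply (derive_chain_sub (7/4 - INR (m k)) (3 + INR (m k) - INR (m k))); [|lra|lra].
    apply derive_chain_shift, derive_chain_zetaE, Hq.
Qed.

Lemma Rabs_weight_z_deriv_le k p z : 3/4 < z < 5/4 ->
  Rabs (weight_z_deriv k p z) <= Rabs (w k) * (INR (m k) + 1) ^ S p.
Proof.
  intros Hz. unfold weight_z_deriv. rewrite !Rabs_mult, pow_1_abs, Rmult_1_l.
  apply Rmult_le_compat_l; [apply Rabs_pos|].
  apply Rabs_poly_deriv_le; [apply Rabs_stirling_coef_le | apply Rabs_le; lra].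
Qed.

Lemma Rabs_shifted_zetaE_deriv_le k j z : 3/4 < z < 5/4 ->
  Rabs (shifted_zetaE_deriv k j z) <= ln_pow_const j * zeta_3_2 q * Rpower q (- (INR (m k) - 1)).
Proof.
  intros Hz. pose proof (INR_m_ge_1 k). apply zetaE_derivs_bound; auto; lra.
Qed.

Definition term_deriv_const (i : nat) : R :=
  zeta_3_2 q * sum_f_R0 (fun p => binom i p * ln_pow_const (i - p)) i.

Lemma Rabs_term_z_deriv_le k i z : 3/4 < z < 5/4 ->
  Rabs (term_z_deriv k i z) <= term_deriv_const i * weight_bound (S i) k.
Proof.
  intros Hz. unfold term_z_deriv, leibniz, term_deriv_const, weight_bound.
  set (X := zeta_3_2 q * (Rabs (w k) * (INR (m k) + 1) ^ S i * Rpower q (- (INR (m k) - 1)))).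
  apply Rle_trans with (sum_f_R0 (fun p => binom i p * ln_pow_const (i - p) * X) i).
  2: { right. rewrite <- scal_sum. unfold X. ring. }
  eapply Rle_trans; [apply sum_f_R0_triangle|].
  apply sum_Rle. intros p Hp.
  pose proof (Rabs_weight_z_deriv_le k p z Hz). pose proof (Rabs_shifted_zetaE_deriv_le k (i - p) z Hz).
  pose proof (binom_nonneg i p). pose proof (ln_pow_const_nonneg (i - p)).
  pose proof (zeta_3_2_nonneg q Hq). pose proof (Rabs_pos (w k)).
  pose proof (exp_pos (- (INR (m k) - 1) * ln q)).
  assert (Hpow : (INR (m k) + 1) ^ S p <= (INR (m k) + 1) ^ S i).
  { apply Rle_pow; [pose proof (pos_INR (m k)); lra | lia]. }
  rewrite !Rabs_mult, (Rabs_right (binom i p)) by lra.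
  apply Rle_trans with (binom i p * (Rabs (w k) * (INR (m k) + 1) ^ S i)
                        * (ln_pow_const (i - p) * zeta_3_2 q * Rpower q (- (INR (m k) - 1)))).
  - apply Rmult_le_compat; try apply Rabs_pos; [apply Rmult_le_pos; [lra | apply Rabs_pos]| |auto].
    apply Rmult_le_compat_l; [lra|]. eapply Rle_trans; [eauto|].
    apply Rmult_le_compat_l; auto.
  - right. unfold X. ring.
Qed.

Definition term_series_z_deriv (i : nat) (z : R) : R := Series (fun k => term_z_deriv k i z).

Lemma derive_chain_term_series : derive_chain (3/4) (5/4) term_series_z_deriv.
Proof.
  apply (derive_chain_Series (3/4) (5/4) term_z_deriv (fun i k => term_deriv_const i * weight_bound (S i) k)).
  - apply derive_chain_term_z_deriv.
  - intros i k z Hz. now apply Rabs_term_z_deriv_le.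
  - intro i. exact (ex_series_scal_l _ _ (Hweight (S i))).
Qed.

Lemma term_z_deriv_O k z :
  term_z_deriv k 0 z = w k * phi_coef (1 - z) (m k) * zetaE_derivs q 0 (z + INR (m k)).
Proof.
  unfold term_z_deriv, leibniz, weight_z_deriv, shifted_zetaE_deriv. simpl.
  rewrite poly_deriv_stirling_O. unfold phi_coef. ring.
Qed.

Lemma term_z_deriv_at_1 k l :
  (-1) ^ l * term_z_deriv k l 1
  = INR (fact l) * (w k / INR (fact (S (m k))) *
      sum_f_R0 (fun j => (-1) ^ j / INR (fact j) * stirling1 (S (m k)) (l - j + 1) *
                         zetaE_deriv j (INR (S (m k))) q) l).
Proof.
  unfold term_z_deriv, leibniz. rewrite !scal_sum, <- sum_f_R0_skip.
  apply sum_eq. intros j Hj.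
  unfold weight_z_deriv, shifted_zetaE_deriv. rewrite Rminus_diag, poly_deriv_stirling_at_0.
  replace (l - (l - j))%nat with j by lia.
  rewrite zetaE_deriv_eq by (auto; rewrite S_INR; pose proof (INR_m_ge_1 k); lra).
  rewrite S_INR, (Rplus_comm (INR (m k))).
  replace (l - j + 1)%nat with (S (l - j)) by lia.
  rewrite binom_C by lia. unfold Binomial.C, stirling_coef.
  replace (l - (l - j))%nat with j by lia.
  rewrite <- (neg1_pow_sub l j Hj).
  assert (Hf : forall n, INR (fact n) <> 0) by (intro; apply not_0_INR, fact_neq_0).
  field. auto.
Qed.

End ShiftedSeries.

Lemma Rabs_phi_coef_le m z : 3/4 < z < 5/4 -> Rabs (phi_coef (1 - z) m) <= INR m + 1.
Proof.
  intros Hz. unfold phi_coef. rewrite <- poly_deriv_stirling_O, <- pow_1.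
  apply Rabs_poly_deriv_le; [apply Rabs_stirling_coef_le | apply Rabs_le; lra].
Qed.

Section Expansion.

Variables (q c0 : R) (m : nat -> nat) (w : nat -> R).
Hypothesis Hq : 1 < q.
Hypothesis Hc0 : 0 < c0.
Hypothesis Hm : forall k, (1 <= m k)%nat.
Hypothesis Hweight : forall e, ex_series (weight_bound q m w e).
Hypothesis Hper : forall z n, 3/4 < z < 5/4 ->
  is_series (fun k => w k * phi_coef (1 - z) (m k) * Rpower (INR n + q) (- (z + INR (m k))))
    (/ 2 * (Phi (1 - z) (c0 + INR (S (S n))) - Phi (1 - z) (c0 + INR n)) - Rpower (INR n + q) (- z)).

Lemma zetaE_eq_Phi_minus_term_series z : 3/4 < z < 5/4 ->
  zetaE z q = / 2 * (Phi (1 - z) (c0 + 1) - Phi (1 - z) c0) - term_series_z_deriv q m w 0 z.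
Proof.
  intros Hz. unfold term_series_z_deriv.
  rewrite (Series_ext _ _ (fun k => term_z_deriv_O q m w k z)).
  apply (zetaE_transfer q c0 z (fun k => w k * phi_coef (1 - z) (m k)) (fun k => INR (m k)));
    auto; try lra.
  - intro k. apply (le_INR 1), Hm.
  - apply (ex_series_Rabs_le _ (weight_bound q m w 1)); [|apply Hweight].
    intro k. unfold weight_bound. rewrite Rabs_mult, Rabs_Rabsolu, Rabs_mult.
    rewrite (Rabs_right (Rpower _ _)) by (left; apply exp_pos).
    apply Rmult_le_compat_r; [left; apply exp_pos|].
    apply Rmult_le_compat_l; [apply Rabs_pos | rewrite pow_1; now apply Rabs_phi_coef_le].
Qed.

Lemma gammaE_eq_Phi_minus_term_series l :
  gammaE l q = (ln (c0 + 1) ^ (l + 1) - ln c0 ^ (l + 1)) / (2 * INR (l + 1))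
               - (-1) ^ l * term_series_z_deriv q m w l 1.
Proof.
  set (F := fun i z => / 2 * (Phi_z_deriv (c0 + 1) i z - Phi_z_deriv c0 i z)
                       - term_series_z_deriv q m w i z).
  assert (HF : derive_chain (3/4) (5/4) F).
  { apply derive_chain_minus; [|now apply derive_chain_term_series].
    apply derive_chain_scal, derive_chain_minus; apply derive_chain_Phi_z_deriv. }
  unfold gammaE, zetaE_deriv.
  rewrite (Derive_n_chain (3/4) (5/4) F (fun s => zetaE s q) HF); [|intros z Hz|lra].
  - unfold F. pose proof (Phi_z_deriv_at_1 (c0 + 1) l). pose proof (Phi_z_deriv_at_1 c0 l).
    assert (INR (l + 1) <> 0) by (apply not_0_INR; lia).
    transitivity (/ 2 * ((-1) ^ l * Phi_z_deriv (c0 + 1) l 1 - (-1) ^ l * Phi_z_deriv c0 l 1)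
                  - (-1) ^ l * term_series_z_deriv q m w l 1); [ring|].
    rewrite H, H0. field. auto.
  - unfold F. rewrite zetaE_eq_Phi_minus_term_series, !Phi_z_deriv_O by lra. reflexivity.
Qed.

Lemma gammaE_expansion l :
  exists Ssum,
    is_series (fun k => w k / INR (fact (S (m k))) *
      sum_f_R0 (fun j => (-1) ^ j / INR (fact j) * stirling1 (S (m k)) (l - j + 1) *
                         zetaE_deriv j (INR (S (m k))) q) l) Ssum /\
    gammaE l q = (ln (c0 + 1) ^ (l + 1) - ln c0 ^ (l + 1)) / (2 * INR (l + 1)) - INR (fact l) * Ssum.
Proof.
  assert (Hfl : INR (fact l) <> 0) by (apply not_0_INR, fact_neq_0).
  assert (Hex : ex_series (fun k => term_z_deriv q m w k l 1)).
  { apply (ex_series_Rabs_le _ (fun k => term_deriv_const q l * weight_bound q m w (S l) k)).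
    - intro k. apply Rabs_term_z_deriv_le; auto; lra.
    - exact (ex_series_scal_l _ _ (Hweight (S l))). }
  exists (/ INR (fact l) * ((-1) ^ l * term_series_z_deriv q m w l 1)). split.
  - unfold term_series_z_deriv. rewrite <- Series_scal_l, <- Series_scal_l.
    apply (is_series_ext_R (fun k => / INR (fact l) * ((-1) ^ l * term_z_deriv q m w k l 1))).
    + intro k. rewrite term_z_deriv_at_1 by auto. field. split; apply not_0_INR, fact_neq_0.
    + apply Series_correct.
      exact (ex_series_scal_l _ _ (ex_series_scal_l _ _ Hex)).
  - rewrite gammaE_eq_Phi_minus_term_series. field. split; [auto | apply not_0_INR; lia].
Qed.

End Expansion.

Lemma is_lim_seq_ratio_pow e : is_lim_seq (fun k => ((INR k + 3) / (INR k + 2)) ^ e) 1.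
Proof.
  induction e as [|e IH]; simpl; [apply is_lim_seq_const|].
  replace 1 with (1 * 1) by ring. apply is_lim_seq_mult'; auto.
  apply (is_lim_seq_ext (fun k => 1 + 1 / (INR k + 2))).
  - intro k. pose proof (pos_INR k). field. lra.
  - pose proof (is_lim_seq_plus' _ _ 1 0 (is_lim_seq_const 1) (is_lim_seq_div_INR_2 1)) as H.
    now rewrite Rplus_0_r in H.
Qed.

Lemma ex_series_pow_mul_geom e r : 0 < r < 1 -> ex_series (fun k => (INR k + 2) ^ e * r ^ k).
Proof.
  intros Hr. apply ex_series_Rabs, (ex_series_DAlembert _ r); [lra| |].
  - intro k. pose proof (pos_INR k).
    apply Rmult_integral_contrapositive. split; apply pow_nonzero; lra.
  - apply (is_lim_seq_ext (fun k => ((INR k + 3) / (INR k + 2)) ^ e * r)).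
    + intro k. rewrite S_INR. pose proof (pos_INR k).
      replace (INR k + 1 + 2) with (INR k + 3) by ring.
      assert (0 < (INR k + 2) ^ e) by (apply pow_lt; lra).
      assert (0 < r ^ k) by (apply pow_lt; lra).
      rewrite Rabs_right.
      * unfold Rdiv. rewrite Rpow_mult_distr, pow_inv. simpl pow. field. lra.
      * apply Rle_ge, Rlt_le, Rdiv_lt_0_compat; apply Rmult_lt_0_compat; auto; apply pow_lt; lra.
    + pose proof (is_lim_seq_mult' _ _ 1 r (is_lim_seq_ratio_pow e) (is_lim_seq_const r)) as H.
      now rewrite Rmult_1_l in H.
Qed.

Lemma Rpower_neg_affine q c d k : Rpower q (- (c + d * INR k)) = Rpower q (- c) * Rpower q (- d) ^ k.
Proof. unfold Rpower. rewrite exp_pow_INR, <- exp_plus. f_equal. ring. Qed.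

Lemma Rpower_neg_lt_1 q b : 1 < q -> 0 < b -> 0 < Rpower q (- b) < 1.
Proof.
  intros Hq Hb. split; [apply exp_pos|]. rewrite <- exp_0. apply exp_increasing.
  assert (0 < ln q) by (rewrite <- ln_1; apply ln_increasing; lra). nra.
Qed.

Lemma ex_series_weight_bound_odd q e : 2 < q ->
  ex_series (weight_bound q (fun k => S k) (fun k => (-1) ^ S k * 2 ^ S k) e).
Proof.
  intros Hq.
  assert (Hr : 0 < 2 * Rpower q (- (1)) < 1).
  { rewrite Rpower_Ropp, Rpower_1 by lra.
    assert (0 < / q < / 2) by (split; [apply Rinv_0_lt_compat | apply Rinv_lt_contravar]; lra).
    lra. }
  apply (ex_series_ext (fun k => 2 * ((INR k + 2) ^ e * (2 * Rpower q (- (1))) ^ k))).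
  - intro k. unfold weight_bound.
    rewrite Rabs_mult, pow_1_abs, Rmult_1_l, Rabs_right by (apply Rle_ge, pow_le; lra).
    rewrite S_INR. replace (- (INR k + 1 - 1)) with (- (0 + 1 * INR k)) by ring.
    rewrite Rpower_neg_affine, Ropp_0, Rpower_O by lra.
    replace (INR k + 1 + 1) with (INR k + 2) by ring.
    rewrite Rpow_mult_distr. simpl. ring.
  - exact (ex_series_scal_l _ _ (ex_series_pow_mul_geom e _ Hr)).
Qed.

Lemma ex_series_weight_bound_even q e : 1 < q ->
  ex_series (weight_bound q (fun k => 2 * S k)%nat (fun _ => 1) e).
Proof.
  intros Hq.
  pose proof (Rpower_neg_lt_1 q 2 Hq ltac:(lra)) as Hr.
  apply (ex_series_Rabs_le _ (fun k => 2 ^ e * Rpower q (- (1)) * ((INR k + 2) ^ e * Rpower q (- (2)) ^ k))).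
  - intro k. unfold weight_bound.
    rewrite Rabs_R1, Rmult_1_l, mult_INR. change (INR 2) with 2. rewrite S_INR.
    replace (- (2 * (INR k + 1) - 1)) with (- (1 + 2 * INR k)) by ring.
    rewrite Rpower_neg_affine.
    pose proof (pos_INR k).
    assert (0 < Rpower q (- (1)) * Rpower q (- (2)) ^ k)
      by (apply Rmult_lt_0_compat; [apply exp_pos | apply pow_lt, exp_pos]).
    assert (H2 : (2 * (INR k + 1) + 1) ^ e <= 2 ^ e * (INR k + 2) ^ e).
    { rewrite <- Rpow_mult_distr. apply pow_incr. lra. }
    rewrite Rabs_right by (apply Rle_ge, Rmult_le_pos; [apply pow_le|]; lra).
    replace (2 ^ e * Rpower q (- (1)) * ((INR k + 2) ^ e * Rpower q (- (2)) ^ k))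
      with ((2 ^ e * (INR k + 2) ^ e) * (Rpower q (- (1)) * Rpower q (- (2)) ^ k)) by ring.
    apply Rmult_le_compat_r; lra.
  - exact (ex_series_scal_l _ _ (ex_series_pow_mul_geom e _ Hr)).
Qed.

Lemma is_series_backward_at_shift q z n : 2 < q -> 3/4 < z < 5/4 ->
  is_series (fun k => (-1) ^ S k * 2 ^ S k * phi_coef (1 - z) (S k) * Rpower (INR n + q) (- (z + INR (S k))))
    (/ 2 * (Phi (1 - z) (q - 2 + INR (S (S n))) - Phi (1 - z) (q - 2 + INR n)) - Rpower (INR n + q) (- z)).
Proof.
  intros Hq Hz. pose proof (pos_INR n).
  replace (q - 2 + INR (S (S n))) with (INR n + q) by (rewrite !S_INR; ring).
  replace (q - 2 + INR n) with (INR n + q - 2) by ring.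
  apply is_series_Phi_backward_diff; lra.
Qed.

Lemma is_series_central_at_shift q z n : 1 < q -> 3/4 < z < 5/4 ->
  is_series (fun k => 1 * phi_coef (1 - z) (2 * S k) * Rpower (INR n + q) (- (z + INR (2 * S k))))
    (/ 2 * (Phi (1 - z) (q - 1 + INR (S (S n))) - Phi (1 - z) (q - 1 + INR n)) - Rpower (INR n + q) (- z)).
Proof.
  intros Hq Hz. pose proof (pos_INR n).
  replace (q - 1 + INR (S (S n))) with (INR n + q + 1) by (rewrite !S_INR; ring).
  replace (q - 1 + INR n) with (INR n + q - 1) by ring.
  apply (is_series_ext_R (fun k => phi_coef (1 - z) (2 * S k) * Rpower (INR n + q) (- (z + INR (2 * S k)))));
    [intro; ring|].
  apply is_series_Phi_central_diff; lra.
Qed.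

Theorem theorem3p19 (l : nat) :
  (forall q : R, 2 < q ->
    exists Ssum : R,
      is_series (fun k : nat =>
        let k1 := S k in
        (-1) ^ k1 * 2 ^ k1 / INR (fact (k1 + 1)) *
        sum_f_R0 (fun j => (-1) ^ j / INR (fact j) *
                   stirling1 (k1 + 1) (l - j + 1) *
                   zetaE_deriv j (INR (k1 + 1)) q) l) Ssum /\
      gammaE l q =
        ((ln (q - 1)) ^ (l + 1) - (ln (q - 2)) ^ (l + 1)) / (2 * INR (l + 1))
        - INR (fact l) * Ssum) /\
  (forall q : R, 1 < q ->
    exists Ssum : R,
      is_series (fun k : nat =>
        let k1 := S k in
        / INR (fact (2 * k1 + 1)) *
        sum_f_R0 (fun j => (-1) ^ j / INR (fact j) *
                   stirling1 (2 * k1 + 1) (l - j + 1) *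
                   zetaE_deriv j (INR (2 * k1 + 1)) q) l) Ssum /\
      gammaE l q =
        ((ln q) ^ (l + 1) - (ln (q - 1)) ^ (l + 1)) / (2 * INR (l + 1))
        - INR (fact l) * Ssum).
Proof.
  split; intros q Hq.
  - assert (Hq1 : 1 < q) by lra. assert (Hc0 : 0 < q - 2) by lra.
    destruct (gammaE_expansion q (q - 2) (fun k => S k) (fun k => (-1) ^ S k * 2 ^ S k)
                Hq1 Hc0 ltac:(intro; cbv beta; lia) (fun e => ex_series_weight_bound_odd q e Hq)
                (fun z n => is_series_backward_at_shift q z n Hq) l) as [Ssum [Hs Hg]].
    exists Ssum. split.
    + refine (is_series_ext_R _ _ _ _ Hs). intro k. cbv zeta.
      now replace (S k + 1)%nat with (S (S k)) by lia.
    + rewrite Hg. now replace (q - 2 + 1) with (q - 1) by ring.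
  - assert (Hc0 : 0 < q - 1) by lra.
    destruct (gammaE_expansion q (q - 1) (fun k => 2 * S k)%nat (fun _ => 1)
                Hq Hc0 ltac:(intro; cbv beta; lia) (fun e => ex_series_weight_bound_even q e Hq)
                (fun z n => is_series_central_at_shift q z n Hq) l) as [Ssum [Hs Hg]].
    exists Ssum. split.
    + refine (is_series_ext_R _ _ _ _ Hs). intro k. cbv zeta.
      replace (2 * S k + 1)%nat with (S (2 * S k)) by lia. unfold Rdiv. ring.
    + rewrite Hg. now replace (q - 1 + 1) with q by ring.
Qed.
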